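(* Let $\mathbf{B}\in\dot{\mathbb{P}}(\mathbb{L}(\mathbf{C}))$ with $|\mathbf{B}|=|\mathbf{C}|$, and suppose that all, or all but one, of the literals $L\in\mathbf{B}$ have a positive monotonic effect on $D$ relative to $\mathbf{C}$. Then $\mathbf{B}$ is singular for $\mathcal{D}(\mathbf{C},\Omega)$ if and only if $\mathbf{B}$ is irreducible for $\mathcal{D}(\mathbf{C},\Omega)$.
   Context: Events are binary random variables on a population $\Omega$; $\overline{X}=1-X$; $\mathbb{L}(\mathbf{C})=\mathbf{C}\cup\{\overline{X}:X\in\mathbf{C}\}$; $\dot{\mathbb{P}}(\mathbb{L}(\mathbf{C}))$ is the set of subsets of $\mathbb{L}(\mathbf{C})$ not containing both $X$ and $\overline{X}$; $(L)_{\mathbf{c}}$ is the value of literal $L$ under assignment $\mathbf{c}$; $\bigwedge(\mathbf{B})=\min_{L\in\mathbf{B}}L$. Potential outcomes $\mathcal{D}(\mathbf{C},\Omega)$: $D_{\mathbf{c}}(\omega)\in\{0,1\}$. A literal $L$ has a positive monotonic effect on $D$ relative to $\mathbf{C}$ if for all $\omega$ and assignments $\mathbf{c},\mathbf{c}'$ differing only in the variable underlying $L$ with $(L)_{\mathbf{c}}=1,(L)_{\mathbf{c}'}=0$, $D_{\mathbf{c}}(\omega)\ge D_{\mathbf{c}'}(\omega)$. $\mathbf{B}$ is a sufficient cause for $D$ relative to $\mathbf{C}$ for $\omega^*$ if some $\mathbf{c}^*$ has $(\bigwedge(\mathbf{B}))_{\mathbf{c}^*}=1$ and $D_{\mathbf{c}}(\omega^*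 )=1$ whenever $(\bigwedge(\mathbf{B}))_{\mathbf{c}}=1$; minimal if no proper subset is such; singular for $\omega^*$ if minimal and no other $\mathbf{B}'\in\dot{\mathbb{P}}(\mathbb{L}(\mathbf{C}))$ is a minimal sufficient cause for $\omega^*$; singular for $\mathcal{D}(\mathbf{C},\Omega)$ if singular for some $\omega^*$. A sufficient cause representation $(\mathbf{A},\mathfrak{B})$ for $\mathcal{D}(\mathbf{C},\Omega)$: binary random variables $\mathbf{A}=\langle A_1,\dots,A_p\rangle$ on $\Omega$ unaffected by interventions on $\mathbf{C}$ and $\mathfrak{B}=\langle\mathbf{B}_1,\dots,\mathbf{B}_p\rangle$, $\mathbf{B}_i\in\dot{\mathbb{P}}(\mathbb{L}(\mathbf{C}))$, with $D_{\mathbf{c}}(\omega)=1$ iff some $j$ has $A_j(\omega)=1$ and $(\bigwedge(\mathbf{B}_j))_{\mathbf{c}}=1$. $\mathbf{B}$ is irreducible for $\mathcal{D}(\mathbf{C},\Omega)$ if every such representation has some $\mathbf{B}_i\supseteq\mathbf{B}$. *)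

From mathcomp Require Import all_boot.
Set Implicit Arguments. Unset Strict Implicit. Unset Printing Implicit Defensive.

(* The set C of binary causes is indexed by a finite type T.
   An assignment c of values to C is a function T -> bool.
   A literal is a pair (X, b) : T * bool; (X, true) stands for X and
   (X, false) for its complement 1 - X. *)
Definition literal (T : finType) := (T * bool)%type.

Definition lit_val (T : finType) (L : literal T) (c : T -> bool) : bool :=
  c L.1 == L.2.

(* membership in P-dot(L(C)): no variable with both literals *)
Definition consistent (T : finType) (B : {set literal T}) : Prop :=
  forall X : T, ~ ((X, true) \in B /\ (X, false) \in B).

(* (/\ B)_c : minimum over the literals of B (1 for empty B) *)
Definition conj_val (T : finType) (B : {set literal T}) (c : T -> bool) : bool :=
  [forall L in B, lit_val L c].

(* Potential outcomes D_c(omega) are given by D omega c. *)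

Definition pos_monotonic (T : finType) (Omega : Type)
  (D : Omega -> (T -> bool) -> bool) (L : literal T) : Prop :=
  forall (w : Omega) (c c' : T -> bool),
    (forall Y : T, Y != L.1 -> c Y = c' Y) ->
    lit_val L c = true -> lit_val L c' = false ->
    D w c' <= D w c.

Definition sufficient_for (T : finType) (Omega : Type)
  (D : Omega -> (T -> bool) -> bool) (B : {set literal T}) (w : Omega) : Prop :=
  (exists cs : T -> bool, conj_val B cs) /\
  (forall c : T -> bool, conj_val B c -> D w c).

Definition minimal_sufficient_for (T : finType) (Omega : Type)
  (D : Omega -> (T -> bool) -> bool) (B : {set literal T}) (w : Omega) : Prop :=
  sufficient_for D B w /\
  (forall B' : {set literal T}, B' \proper B -> ~ sufficient_for D B' w).

Definition singular_for (T : finType) (Omega : Type)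
  (D : Omega -> (T -> bool) -> bool) (B : {set literal T}) (w : Omega) : Prop :=
  minimal_sufficient_for D B w /\
  (forall B' : {set literal T}, consistent B' -> B' <> B ->
     ~ minimal_sufficient_for D B' w).

Definition singular (T : finType) (Omega : Type)
  (D : Omega -> (T -> bool) -> bool) (B : {set literal T}) : Prop :=
  exists w : Omega, singular_for D B w.

Definition sc_representation (T : finType) (Omega : Type)
  (D : Omega -> (T -> bool) -> bool) (p : nat)
  (A : 'I_p -> Omega -> bool) (Bs : 'I_p -> {set literal T}) : Prop :=
  (forall j, consistent (Bs j)) /\
  (forall (w : Omega) (c : T -> bool),
     D w c = [exists j : 'I_p, A j w && conj_val (Bs j) c]).

Definition irreducible (T : finType) (Omega : Type)
  (D : Omega -> (T -> bool) -> bool) (B : {set literal T}) : Prop :=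
  forall (p : nat) (A : 'I_p -> Omega -> bool) (Bs : 'I_p -> {set literal T}),
    sc_representation D A Bs -> exists i : 'I_p, B \subset Bs i.

From mathcomp Require Import all_boot.
From Stdlib Require Import FunctionalExtensionality Classical.
Set Implicit Arguments. Unset Strict Implicit. Unset Printing Implicit Defensive.

(* A consistent B with |B| = |C| has one literal per variable: it is the graph
   {(X, c X) | X} of a single assignment c, satisfied by c alone. Writing c^X
   for c with X flipped, B is minimally sufficient for omega iff
   D_c(omega) = 1 and D_{c^X}(omega) = 0 for all X.
   - Singular => irreducible: the component of a representation firing at
     (omega, c) contains all of B, or it would also fire at some c^X.
   - Irreducible => singular: if no omega makes B minimally sufficient, the
     graphs of all c' <> c together with the sets B \ {(X, c X)} represent D,
     and none contains B. At an omega making B minimally sufficient, another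
     sufficient consistent B' not below B reverses c on a nonempty set S;
     un-flipping S except one X0 (the variable of the non-monotonic literal
     if it lies in S) keeps D = 1 by monotonicity, contradicting D_{c^X0} = 0.
   We develop assignments and graphs, then these facts about potential
   outcomes, then the characterization for graphs, and finally the theorem. *)

Section Assignments.
Variable T : finType.
Implicit Types (c d : T -> bool) (S : {set T}) (P Q : {set literal T}).

Definition graph c : {set literal T} := [set (X, c X) | X : T].

Definition flips c S : T -> bool := fun Y => if Y \in S then ~~ c Y else c Y.

Definition opposed c P : {set T} := [set Y | (Y, ~~ c Y) \in P].

Lemma conj_val_sub P Q c : P \subset Q -> conj_val Q c -> conj_val P c.
Proof. by move=> /subsetP PQ /forall_inP Qc; apply/forall_inP => L /PQ /Qc. Qed.

Lemma consistent_sub P Q : P \subset Q -> consistent Q -> consistent P.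
Proof. by move=> /subsetP PQ Qcons X [/PQ XtQ /PQ XfQ]; apply: (Qcons X). Qed.

Lemma conj_graphP c d : reflect (d =1 c) (conj_val (graph c) d).
Proof.
apply: (iffP forall_inP) => [graphd X | dc _ /imsetP [X _ ->]].
- exact/eqP/(graphd (X, c X))/imset_f.
- by rewrite /lit_val /= dc.
Qed.

Lemma graph_consistent c : consistent (graph c).
Proof.
move=> X [/imsetP [Y _ [<- eXt]] /imsetP [Y' _ [<- eXf]]].
by rewrite -eXt in eXf.
Qed.

Lemma full_graph P : consistent P -> #|P| = #|T| -> exists c, P = graph c.
Proof.
move=> Pcons cardP; exists (fun X => (X, true) \in P).
have sub_graph : P \subset graph (fun X => (X, true) \in P).
  apply/subsetP => [[X b] XbP]; apply/imsetP; exists X => //.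
  case: b XbP => [-> // | XfP]; case XtP: ((X, true) \in P) => //.
  by case: (Pcons X).
apply/eqP; rewrite eqEcard sub_graph cardP card_imset ?leqnn //.
by move=> X Y [].
Qed.

Lemma conj_val_flip P c X :
  conj_val P c -> (X, c X) \notin P -> conj_val P (flips c [set X]).
Proof.
move=> /forall_inP Pc XnP; apply/forall_inP => [[Y b] YbP].
rewrite /lit_val /flips /= inE; case: (eqVneq Y X) => [eYX | _]; last exact: Pc YbP.
subst Y; have /eqP cXb : c X == b := Pc _ YbP.
by rewrite cXb YbP in XnP.
Qed.

Lemma conj_graph_remove c X d :
  conj_val (graph c :\ (X, c X)) d -> d = c \/ d = flips c [set X].
Proof.
move=> /forall_inP dP.
have agree Y : Y != X -> d Y = c Y.
  move=> nYX; apply/eqP/(dP (Y, c Y)).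
  by rewrite in_setD1 imset_f // andbT; apply: contra nYX => /eqP [->].
have [/eqP dX | ndX] := boolP (d X == c X); [left | right];
  apply: functional_extensionality => Y; rewrite /flips ?inE;
  case: (eqVneq Y X) => [-> | /agree //] //.
by move: ndX; case: (d X); case: (c X).
Qed.

Lemma conj_flips_opposed P c : consistent P -> conj_val P (flips c (opposed c P)).
Proof.
move=> Pcons; apply/forall_inP => [[Y b] YbP]; rewrite /lit_val /flips /= inE.
case: b YbP; case: (c Y) => YbP; case: ifP => //= YoppP;
  first [by rewrite YbP in YoppP | by case: (Pcons Y)].
Qed.

Lemma sub_graph_opposed0 P c : opposed c P = set0 -> P \subset graph c.
Proof.
move=> opp0; apply/subsetP => [[Y b] YbP]; apply/imsetP; exists Y => //.
have : Y \notin opposed c P by rewrite opp0 inE.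
by rewrite inE; case: b YbP; case: (c Y) => // ->.
Qed.

Lemma fun_of_finfun c : fun_of_fin (finfun c) = c.
Proof. by apply: functional_extensionality => X; rewrite ffunE. Qed.

Lemma flips_setD1 c S X :
  X \in S -> flips (flips c [set X]) (S :\ X) = flips c S.
Proof.
move=> XS; apply: functional_extensionality => Y; rewrite /flips !inE.
by case: eqVneq => [-> | _] /=; rewrite ?XS.
Qed.

End Assignments.

Section PotentialOutcomes.
Variables (T : finType) (Omega : Type) (D : Omega -> (T -> bool) -> bool).

Lemma monotone_flips (c : T -> bool) (S : {set T}) (w : Omega) :
  (forall Y, Y \in S -> pos_monotonic D (Y, c Y)) -> D w (flips c S) <= D w c.
Proof.
elim: {S}_.+1 {-2}S (ltnSn #|S|) => // n IH S ltSn mono.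
have [-> | [Y YS]] := set_0Vmem S.
  by rewrite (_ : flips c set0 = c) //; apply: functional_extensionality => Z;
    rewrite /flips inE.
have ltS'n : #|S :\ Y| < n by move: ltSn; rewrite (cardsD1 Y S) YS.
apply: leq_trans (IH _ ltS'n _); last by move=> Z /setD1P [_ /mono].
apply: (mono Y YS w) => [Z /= nZY | |]; rewrite /lit_val /flips /= ?inE ?eqxx //.
- by rewrite nZY.
- by rewrite YS; case: (c Y).
Qed.

Lemma fin_representation (U : finType) (A : U -> Omega -> bool)
    (Bs : U -> {set literal T}) :
  (forall u, consistent (Bs u)) ->
  (forall w c, D w c = [exists u, A u w && conj_val (Bs u) c]) ->
  sc_representation D (fun j : 'I_#|U| => A (enum_val j))
    (fun j => Bs (enum_val j)).
Proof.
move=> Bcons HD; split=> [j | w c]; first exact: Bcons.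
rewrite HD; apply/existsP/existsP => [[u Hu] | [j Hj]]; last by exists (enum_val j).
by exists (enum_rank u); rewrite enum_rankK.
Qed.

(* If every outcome produced at c is also produced at some c^X, then D has a
   representation none of whose components contains the graph of c: use the
   graphs of all c' <> c, and graph c \ {(X, c X)} where D fires at c and c^X. *)
Lemma avoiding_representation c :
  (forall w, D w c -> [exists X, D w (flips c [set X])]) ->
  exists p (A : 'I_p -> Omega -> bool) (Bs : 'I_p -> {set literal T}),
    sc_representation D A Bs /\ forall i, ~~ (graph c \subset Bs i).
Proof.
move=> flipD.
pose U : finType := ({d : {ffun T -> bool} | d != finfun c} + T)%type.
pose A (u : U) w := match u with
  | inl d => D w (val d) | inr X => D w c && D w (flips c [set X]) end.
pose Bs (u : U) := match u with
  | inl d => graph (val d) | inr X => graph c :\ (X, c X) end.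
have graphc : conj_val (graph c) c by apply/conj_graphP.
exists #|U|, (fun j => A (enum_val j)), (fun j => Bs (enum_val j)); split.
  apply: fin_representation => [[d | X] | w d] /=.
  - exact: graph_consistent.
  - exact: consistent_sub (subD1set _ _) (@graph_consistent _ c).
  apply/idP/existsP => [Dd | [[e | X] /andP [Au Cu]]].
  - have [edc | ne] := eqVneq (finfun d) (finfun c).
      have := congr1 fun_of_fin edc; rewrite !fun_of_finfun => edc'.
      subst d; have /existsP [X DX] := flipD w Dd.
      exists (inr X); rewrite /= Dd DX /=.
      exact: conj_val_sub (subD1set _ _) graphc.
    exists (inl (exist (fun e => e != finfun c) _ ne) : U).
    by rewrite /A /Bs /= fun_of_finfun Dd; apply/conj_graphP.
  - by move: Cu => /conj_graphP /functional_extensionality ->.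
  - by move/andP: Au => [Dc DX]; case: (conj_graph_remove Cu) => ->.
move=> j; case: (enum_val j) => [e | X] /=; apply/negP.
- move=> sub; have /conj_graphP ec : conj_val (graph c) (val e).
    by apply: conj_val_sub sub _; apply/conj_graphP.
  by have /eqP := valP e; apply; apply/ffunP => X; rewrite ffunE; exact: ec.
- by move=> /subsetP /(_ (X, c X)); rewrite in_setD1 eqxx imset_f => // /(_ isT).
Qed.

Section Graph.
Variable c : T -> bool.

Lemma graph_minimal_sufficientP w :
  minimal_sufficient_for D (graph c) w <->
  D w c /\ forall X, ~~ D w (flips c [set X]).
Proof.
have graphc : conj_val (graph c) c by apply/conj_graphP.
split.
- case=> [[_ suff] minimal]; have Dc := suff c graphc; split=> // X.
  apply/negP => DX; apply: (minimal (graph c :\ (X, c X))).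
    by rewrite properD1 // imset_f.
  split; first by exists c; exact: conj_val_sub (subD1set _ _) graphc.
  by move=> d /conj_graph_remove [] ->.
- case=> Dc Dflip; split.
    split; first by exists c.
    by move=> d /conj_graphP /functional_extensionality ->.
  move=> P /properP [sub [_ /imsetP [X _ ->] XnP]] [_ suff].
  have := suff _ (conj_val_flip (conj_val_sub sub graphc) XnP).
  by rewrite (negbTE (Dflip X)).
Qed.

Lemma graph_irreducible_of_singular :
  singular D (graph c) -> irreducible D (graph c).
Proof.
case=> w [/graph_minimal_sufficientP [Dc Dflip] _] p A Bs [_ HD].
move: Dc; rewrite HD => /existsP [j /andP [Aj Cj]].
exists j; apply/subsetP => _ /imsetP [X _ ->]; apply/negPn/negP => XnBs.
have := Dflip X; rewrite HD negb_exists => /forallP /(_ j).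
by rewrite Aj (conj_val_flip Cj XnBs).
Qed.

(* Irreducibility forces some omega at which the graph is minimally
   sufficient: otherwise the avoiding representation exists. *)
Lemma graph_irreducible_witness :
  irreducible D (graph c) -> exists w, D w c /\ forall X, ~~ D w (flips c [set X]).
Proof.
move=> irr; apply: NNPP => nowit.
have [|p [A [Bs [rep avoid]]]] := @avoiding_representation c.
  move=> w Dw; apply/existsP; apply: NNPP => noflip; apply: nowit.
  by exists w; split=> // X; apply/negP => DX; apply: noflip; exists X.
by have [i sub] := irr _ _ _ rep; move: (avoid i); rewrite sub.
Qed.

(* With all but one literal of the graph monotonic, minimal sufficiency at
   omega is singular: no other consistent set is even sufficient there
   unless it lies strictly below the graph. *)
Lemma graph_singular_for (L0 : literal T) w :
  (forall L, L \in graph c -> L <> L0 -> pos_monotonic D L) ->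
  D w c -> (forall X, ~~ D w (flips c [set X])) -> singular_for D (graph c) w.
Proof.
move=> mono Dc Dflip.
have msc : minimal_sufficient_for D (graph c) w by apply/graph_minimal_sufficientP.
split=> // P Pcons neP [suffP _].
have [opp0 | [X1 X1S]] := set_0Vmem (opposed c P).
  apply: msc.2 suffP; rewrite properEneq sub_graph_opposed0 // andbT.
  exact/eqP.
set S := opposed c P in X1S *.
pose X0 := if L0.1 \in S then L0.1 else X1.
have X0S : X0 \in S by rewrite /X0; case: ifP.
have monoS Y : Y \in S :\ X0 -> pos_monotonic D (Y, flips c [set X0] Y).
  move=> /setD1P [nYX0 YS]; rewrite /flips inE (negbTE nYX0).
  apply: mono; first exact: imset_f.
  by move=> eL0; move: nYX0; rewrite /X0 -eL0 /= YS eqxx.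
have := monotone_flips w monoS; rewrite flips_setD1 // (negbTE (Dflip X0)).
by rewrite (suffP.2 _ (conj_flips_opposed c Pcons)).
Qed.

End Graph.
End PotentialOutcomes.

Theorem mainTheorem17 (T : finType) (Omega : Type)
  (D : Omega -> (T -> bool) -> bool) (B : {set literal T}) :
  consistent B ->
  #|B| = #|T| ->
  (exists L0 : literal T, forall L : literal T, L \in B -> L <> L0 ->
     pos_monotonic D L) ->
  (singular D B <-> irreducible D B).
Proof.
move=> Bcons cardB [L0 mono].
have [c eBc] := full_graph Bcons cardB; subst B.
split; first exact: graph_irreducible_of_singular.
move=> /graph_irreducible_witness [w [Dc Dflip]].
by exists w; exact: graph_singular_for mono Dc Dflip.
Qed.
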